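(* (5) $\lambda(L_1\sqcup C_2)$ is isomorphic to $L_1\sqcup L_1\sqcup C_2$. (6) $\lambda(L_2\times C_2)$ is isomorphic to $\big(L_1\sqcup(L_2\times L_2)\sqcup L_1\big)\times C_2$.
   Context: $\lambda(X)$ is the set of maximal linked upfamilies on $X$ (an upfamily is a family of nonempty subsets closed under supersets; linked means any two members intersect; maximal linked means not properly contained in another linked upfamily), with operation $\mathcal A*\mathcal B=\big\langle \bigcup_{a\in A} a*B_a : A\in\mathcal A,\ \{B_a\}_{a\in A}\subset\mathcal B\big\rangle$, where $\langle\mathcal C\rangle=\{A\subset X:\exists C\in\mathcal C,\ C\subset A\}$. $C_n=\{z\in\mathbb C:z^n=1\}$; $L_n=\{0,\dots,n-1\}$ with operation $\min$. For semigroups $(X,* )$, $(Y,\star)$, the disjoint ordered union $X\sqcup Y$ is the disjoint union with operation $x\circ y=x*y$ for $x,y\in X$; $x\circ y=x$ if $x\in X,y\in Y$; $x\circ y=y$ if $x\in Y,y\in X$; $x\circ y=x\star y$ for $x,y\in Y$ (this operation is associative: $(X\sqcup Y)\sqcup Z=X\sqcup(Y\sqcup Z)$). *)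

From HB Require Import structures.
From mathcomp Require Import all_boot.
Set Implicit Arguments. Unset Strict Implicit. Unset Printing Implicit Defensive.

Record fsemigroup := FSG { sg_car : finType; sg_op : sg_car -> sg_car -> sg_car }.

Section Lambda.
Variable X : finType.
Variable op : X -> X -> X.

Definition upfamily (A : {set {set X}}) : Prop :=
  forall a, a \in A -> a != set0 /\ (forall b : {set X}, a \subset b -> b \in A).

Definition linked (A : {set {set X}}) : Prop :=
  forall a b, a \in A -> b \in A -> a :&: b != set0.

Definition maxlinked (A : {set {set X}}) : Prop :=
  [/\ upfamily A, linked A &
      forall B, upfamily B -> linked B -> A \subset B -> B = A].

Definition lmul (a : X) (B : {set X}) : {set X} := [set op a b | b in B].

Definition lam_op (cA cB : {set {set X}}) : {set {set X}} :=
  [set C : {set X} | [exists A in cA, exists f : {ffun X -> {set X}},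
      [forall a in A, f a \in cB] && (\bigcup_(a in A) lmul a (f a) \subset C)]].
End Lambda.

Definition lambda_iso (S T : fsemigroup) : Prop :=
  exists g : sg_car T -> {set {set sg_car S}},
    [/\ injective g,
        (forall F, maxlinked F <-> (exists t, g t = F)) &
        forall t t', g (sg_op t t') = lam_op (@sg_op S) (g t) (g t')].

Definition L (n : nat) : fsemigroup :=
  @FSG 'I_n (fun a b => if (a <= b)%N then a else b).

Definition C (n : nat) : fsemigroup :=
  @FSG 'I_n.+1 (fun a b => inord ((a + b) %% n.+1)).
Definition C2 := C 1.

Definition sg_union (S T : fsemigroup) : fsemigroup :=
  @FSG (sg_car S + sg_car T)%type
    (fun x y => match x, y with
                | inl a, inl b => inl (sg_op a b)
                | inl a, inr _ => inl a
                | inr _, inl b => inl b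
                | inr a, inr b => inr (sg_op a b)
                end).

Definition sg_prod (S T : fsemigroup) : fsemigroup :=
  @FSG (sg_car S * sg_car T)%type
    (fun x y => (sg_op x.1 y.1, sg_op x.2 y.2)).

From HB Require Import structures.
From mathcomp Require Import all_boot.
Set Implicit Arguments. Unset Strict Implicit. Unset Printing Implicit Defensive.

(* Both isomorphisms are proved by a certified finite computation.
   First, general facts about a finite set X: a linked upfamily F is maximal
   iff every nonempty set outside F misses some member of F ([maxlinkedE]);
   then F contains exactly one of b and ~: b ([maxlinked_compl]), so F is
   determined by its members through one fixed point; and for upfamilies the
   product of lambda(X) has the closed form of [lam_opE]. *)

Section MaxLinked.
Variable X : finType.
Implicit Types (F : {set {set X}}) (a b c : {set X}).

Definition upset b : {set {set X}} := [set c : {set X} | b \subset c].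

Lemma linked_extend F b :
  upfamily F -> linked F -> b != set0 -> (forall a, a \in F -> a :&: b != set0) ->
  upfamily (F :|: upset b) /\ linked (F :|: upset b).
Proof.
move=> Fup Flk bn Fb; split.
  move=> a; rewrite !inE => /orP[aF|ba].
    have [an aup] := Fup a aF.
    by split=> // c ac; rewrite inE aup.
  split; first by apply: contraNneq bn => a0; rewrite -subset0 -a0.
  by move=> c ac; rewrite !inE (subset_trans ba ac) orbT.
have meet_sub a c : a \in F -> b \subset c -> a :&: c != set0.
  move=> aF bc; apply: contraNneq (Fb a aF) => ac0.
  by rewrite -subset0 -ac0 setIS.
move=> a c; rewrite !inE => /orP[aF|ba] /orP[cF|bc].
- exact: Flk.
- exact: meet_sub.
- by rewrite setIC; apply: meet_sub.
- by apply: contraNneq bn => ac0; rewrite -subset0 -ac0 subsetI ba bc.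
Qed.

Lemma maxlinkedE F : maxlinked F <->
  [/\ upfamily F, linked F &
      forall b, b != set0 -> b \notin F -> exists2 a, a \in F & a :&: b == set0].
Proof.
split=> [[Fup Flk Fmax] | [Fup Flk Fdisj]]; split=> //.
  move=> b bn bF.
  have [/existsP[a /andP[aF ab]]|Fb] := boolP [exists a in F, a :&: b == set0].
    by exists a.
  have meets a : a \in F -> a :&: b != set0.
    by move=> aF; apply: contra Fb => ab; apply/existsP; exists a; rewrite aF.
  have [Bup Blk] := linked_extend Fup Flk bn meets.
  have /setP/(_ b) := Fmax _ Bup Blk (subsetUl _ _).
  by rewrite !inE subxx orbT (negbTE bF).
move=> B Bup Blk FB; apply/eqP; rewrite eqEsubset FB andbT; apply/subsetP => c cB.
apply: contraT => cF; have [a aF /eqP ac0] := Fdisj c (Bup c cB).1 cF.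
by have := Blk a c (subsetP FB a aF) cB; rewrite ac0 eqxx.
Qed.

(* Over a nonempty X, a maximal linked family contains exactly one of each
   pair b, ~: b; so it is determined by its members containing a given point. *)
Lemma maxlinked_compl (x0 : X) F b : maxlinked F -> (b \in F) = (~: b \notin F).
Proof.
move=> /maxlinkedE[Fup Flk Fdisj].
have [bF|bF] := boolP (b \in F).
  by apply/esym/negP => cF; have := Flk _ _ bF cF; rewrite setICr eqxx.
have TF : setT \in F.
  have Tn : [set: X] != set0 by apply/set0Pn; exists x0.
  apply: contraT => TF; have [a aF] := Fdisj _ Tn TF.
  by rewrite setIT => /eqP a0; have [] := Fup a aF; rewrite a0 eqxx.
have [/eqP b0|bn] := boolP (b == set0); first by rewrite b0 setC0 TF.
have [a aF /eqP ab0] := Fdisj b bn bF.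
have: a \subset ~: b by rewrite -disjoints_subset -setI_eq0 ab0.
by move=> /((Fup a aF).2) ->.
Qed.

Lemma lam_opE (op : X -> X -> X) (cA cB : {set {set X}}) :
  upfamily cA -> upfamily cB ->
  lam_op op cA cB = [set C : {set X} | [set a | [set b | op a b \in C] \in cB] \in cA].
Proof.
move=> Aup Bup; apply/setP => C; rewrite !inE; apply/idP/idP.
  case/existsP => A /andP[AcA /existsP[f /andP[/forallP fB fA_C]]].
  apply: (Aup A AcA).2; apply/subsetP => a aA; rewrite inE.
  have faB : f a \in cB by have := fB a; rewrite aA.
  apply: (Bup _ faB).2; apply/subsetP => b fab; rewrite inE.
  by apply: (subsetP fA_C); apply/bigcupP; exists a => //; apply/imsetP; exists b.
move=> DcA; apply/existsP; exists [set a | [set b | op a b \in C] \in cB].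
rewrite DcA /=; apply/existsP; exists [ffun a => [set b | op a b \in C]].
apply/andP; split; first by apply/forallP => a; rewrite ffunE inE; apply/implyP.
apply/subsetP => c /bigcupP[a _]; rewrite ffunE => /imsetP[b].
by rewrite inE => Cab ->.
Qed.

End MaxLinked.

Fixpoint bitvecs (k : nat) : seq (seq bool) :=
  if k is k'.+1 then [seq true :: m | m <- bitvecs k'] ++ [seq false :: m | m <- bitvecs k']
  else [:: [::]].

Lemma mem_cons_map (b b' : bool) (m : seq bool) (s : seq (seq bool)) :
  (b' :: m \in [seq b :: v | v <- s]) = (b' == b) && (m \in s).
Proof.
apply/mapP/andP => [[v vs [-> ->]] | [/eqP -> ms]]; first by rewrite eqxx.
by exists m.
Qed.

Lemma mem_bitvecs k m : (m \in bitvecs k) = (size m == k).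
Proof.
elim: k m => [|k IH] [|b m] //=; rewrite mem_cat.
  by apply/negbTE/norP; split; apply/mapP => -[].
by rewrite !mem_cons_map IH eqSS; case: b; rewrite /= ?andbF ?orbF.
Qed.

Fixpoint subseqs (T : Type) (s : seq T) : seq (seq T) :=
  if s is x :: s' then [seq x :: r | r <- subseqs s'] ++ subseqs s' else [:: [::]].

Lemma filter_subseqs (T : eqType) (s : seq T) (P : pred T) : filter P s \in subseqs s.
Proof.
elim: s => [|x s IH] //=; rewrite mem_cat.
by case: (P x); rewrite ?map_f ?IH ?orbT.
Qed.

(* Subsets of X are coded by bit vectors along an enumeration xs of X, and
   families of subsets by boolean predicates on bit vectors. *)
Section Coding.
Variables (X : finType) (xs : seq X) (x0 : X).
Hypotheses (xs_uniq : uniq xs) (xs_total : forall x, x \in xs).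
Local Notation n := (size xs).
Local Notation vecs := (bitvecs (size xs)).
Implicit Types (b c : {set X}) (m : seq bool) (p q : pred (seq bool)).

Definition bits b : seq bool := [seq x \in b | x <- xs].
Definition set_of_bits m : {set X} := [set x | nth false m (index x xs)].
Definition fam p : {set {set X}} := [set b | p (bits b)].

Lemma nth_bits b i : i < n -> nth false (bits b) i = (nth x0 xs i \in b).
Proof. by move=> i_lt; rewrite (nth_map x0). Qed.

Lemma nth_bits_index b x : nth false (bits b) (index x xs) = (x \in b).
Proof. by rewrite nth_bits ?index_mem ?nth_index. Qed.

Lemma bitsK : cancel bits set_of_bits.
Proof. by move=> b; apply/setP => x; rewrite inE nth_bits_index. Qed.

Lemma set_of_bitsK m : size m = n -> bits (set_of_bits m) = m.
Proof.
move=> m_n; apply: (@eq_from_nth _ false); first by rewrite size_map.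
by move=> i; rewrite size_map => i_lt; rewrite nth_bits // inE index_uniq.
Qed.

Lemma bits_in_vecs b : bits b \in vecs.
Proof. by rewrite mem_bitvecs size_map. Qed.

Lemma all_vecsP (P : pred (seq bool)) : reflect (forall b, P (bits b)) (all P vecs).
Proof.
apply: (iffP allP) => [Pvecs b | Pbits m]; first exact: Pvecs (bits_in_vecs b).
by rewrite mem_bitvecs => /eqP m_n; rewrite -(set_of_bitsK m_n).
Qed.

Lemma has_vecsP (P : pred (seq bool)) : reflect (exists b, P (bits b)) (has P vecs).
Proof.
apply: (iffP hasP) => [[m] | [b Pb]]; last by exists (bits b); rewrite ?bits_in_vecs.
by rewrite mem_bitvecs => /eqP m_n; rewrite -(set_of_bitsK m_n) => Pm; exists (set_of_bits m).
Qed.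

Lemma eq_famP p q : fam p = fam q <-> all (fun m => p m == q m) vecs.
Proof.
split=> [pq | /all_vecsP pq]; last by apply/setP => b; rewrite !inE; apply/eqP.
by apply/all_vecsP => b; apply/eqP; have /setP/(_ b) := pq; rewrite !inE.
Qed.

Definition subbits m m' := all (fun i => nth false m i ==> nth false m' i) (iota 0 n).
Definition meetbits m m' := has (fun i => nth false m i && nth false m' i) (iota 0 n).
Definition nonzero_bits m := has (fun i => nth false m i) (iota 0 n).

Lemma subbitsE b c : subbits (bits b) (bits c) = (b \subset c).
Proof.
apply/allP/subsetP => [bc x xb | bc i].
  have := bc (index x xs); rewrite !nth_bits_index xb mem_iota index_mem xs_total.
  by move=> /(_ isT).
by rewrite mem_iota add0n => i_lt; rewrite !nth_bits //; apply/implyP/bc.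
Qed.

Lemma meetbitsE b c : meetbits (bits b) (bits c) = (b :&: c != set0).
Proof.
apply/hasP/set0Pn => [[i] | [x]].
  by rewrite mem_iota add0n => i_lt; rewrite !nth_bits // => bc; exists (nth x0 xs i); rewrite inE.
rewrite inE => bc; exists (index x xs); first by rewrite mem_iota index_mem xs_total.
by rewrite !nth_bits_index.
Qed.

Lemma nonzero_bitsE b : nonzero_bits (bits b) = (b != set0).
Proof. by rewrite -[b in RHS]setIid -meetbitsE; apply: eq_has => i; rewrite andbb. Qed.

(* The boolean criterion of maxlinkedE, on codes. *)
Definition maxlinked_code p :=
  [&& all (fun m => p m ==> nonzero_bits m && all (fun m' => subbits m m' ==> p m') vecs) vecs,
      all (fun m => all (fun m' => p m ==> p m' ==> meetbits m m') vecs) vecs &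
      all (fun m => nonzero_bits m ==> p m || has (fun m' => p m' && ~~ meetbits m' m) vecs)
          vecs].

Lemma maxlinked_codeP p : maxlinked (fam p) <-> maxlinked_code p.
Proof.
apply: (iff_trans (maxlinkedE (fam p))).
split=> [[Fup Flk Fdisj] | /and3P[/all_vecsP up /all_vecsP lk /all_vecsP dj]].
  apply/and3P; split; apply/all_vecsP => b.
  - apply/implyP => pb; have /Fup[bn bup] : b \in fam p by rewrite inE.
    rewrite nonzero_bitsE bn; apply/all_vecsP => c; rewrite subbitsE.
    by apply/implyP => /bup; rewrite inE.
  - apply/all_vecsP => c; do 2!apply/implyP => ?.
    by rewrite meetbitsE; apply: Flk; rewrite inE.
  - rewrite nonzero_bitsE; apply/implyP => bn; have [//|pb] := boolP (p (bits b)).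
    have [a aF ab] : exists2 a, a \in fam p & a :&: b == set0 by apply: Fdisj; rewrite ?inE.
    by apply/has_vecsP; exists a; rewrite meetbitsE ab andbT; rewrite inE in aF.
split.
- move=> a; rewrite inE => pa; have := up a; rewrite pa nonzero_bitsE.
  case/andP => -> /all_vecsP sub; split=> // c ac.
  by have := sub c; rewrite subbitsE ac inE.
- by move=> a c; rewrite !inE => pa pc; have /all_vecsP/(_ c) := lk a; rewrite pa pc meetbitsE.
- move=> b bn; rewrite inE => pb; have := dj b.
  rewrite nonzero_bitsE bn (negbTE pb) => /has_vecsP[a /andP[pa]].
  by rewrite meetbitsE negbK => ab; exists a; rewrite ?inE.
Qed.

(* The product of lambda(X) on codes, following lam_opE; the code may use any
   (computable) presentation op' of the operation op. *)
Definition lam_code (op : X -> X -> X) p q : pred (seq bool) := fun m =>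
  p [seq q [seq nth false m (index (op x y) xs) | y <- xs] | x <- xs].

Lemma lam_fam op op' p q : op =2 op' -> upfamily (fam p) -> upfamily (fam q) ->
  lam_op op (fam p) (fam q) = fam (lam_code op' p q).
Proof.
move=> opE pup qup; rewrite lam_opE //; apply/setP => C; rewrite !inE /lam_code /bits.
congr p; apply: eq_map => x; rewrite !inE; congr q.
by apply: eq_map => y; rewrite inE opE nth_bits_index.
Qed.

(* By maxlinked_compl, a maximal linked family is determined by its members
   containing the first element of xs, i.e. by a list l of codes starting
   with a 1. *)
Definition head_vecs := [seq m <- vecs | head false m].
Definition code_of_heads (l : seq (seq bool)) : pred (seq bool) := fun m =>
  if head false m then m \in l else map negb m \notin l.

Lemma maxlinked_fam F :
  maxlinked F -> F = fam (code_of_heads [seq m <- head_vecs | set_of_bits m \in F]).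
Proof.
move=> Fml; have head_bits b : head false (bits b) = (head x0 xs \in b).
  by rewrite /bits; case: xs (xs_total x0).
apply/setP => b; rewrite inE /code_of_heads head_bits.
have [b_x1|b_x1] := ifP.
  by rewrite !mem_filter bitsK head_bits b_x1 bits_in_vecs /= andbT.
have -> : [seq ~~ i | i <- bits b] = bits (~: b).
  by rewrite /bits -map_comp; apply: eq_map => x; rewrite /= inE.
rewrite !mem_filter bitsK head_bits inE b_x1 bits_in_vecs /= andbT.
exact: maxlinked_compl x0 F b Fml.
Qed.

End Coding.

Section Certificate.
Variables (S T : fsemigroup) (xs : seq (sg_car S)) (ts : seq (sg_car T)).
Variables (opS : sg_car S -> sg_car S -> sg_car S) (opT : sg_car T -> sg_car T -> sg_car T).
Variable code : sg_car T -> pred (seq bool).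
Local Notation vecs := (bitvecs (size xs)).
Local Notation same_code p q := (all (fun m => p m == q m) vecs).

Definition certificate : bool :=
  [&& all (fun t => maxlinked_code xs (code t)) ts,
      all (fun t => all (fun t' => same_code (code t) (code t') ==> (t == t')) ts) ts,
      all (fun t => all (fun t' =>
        same_code (code (opT t t')) (lam_code xs opS (code t) (code t'))) ts) ts &
      all (fun l => maxlinked_code xs (code_of_heads l) ==>
                    has (fun t => same_code (code t) (code_of_heads l)) ts)
          (subseqs (head_vecs xs))].

Theorem lambda_iso_of_certificate (x0 : sg_car S) :
  @sg_op S =2 opS -> @sg_op T =2 opT ->
  uniq xs -> (forall x, x \in xs) -> (forall t, t \in ts) ->
  certificate -> lambda_iso S T.
Proof.
move=> opSE opTE xs_uniq xs_total ts_total.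
case/and4P => /allP code_ml /allP code_inj /allP code_hom /allP code_onto.
have famP := eq_famP x0 xs_uniq; have mlP := maxlinked_codeP x0 xs_uniq xs_total.
exists (fun t => fam xs (code t)); split.
- move=> t t' /famP same.
  by have /allP/(_ t' (ts_total t')) := code_inj t (ts_total t); rewrite same => /eqP.
- move=> F; split=> [Fml | [t <-]]; last exact/mlP/code_ml.
  have FE := maxlinked_fam x0 xs_total Fml.
  have Fcode : maxlinked_code xs (code_of_heads [seq m <- head_vecs xs | set_of_bits xs m \in F]).
    by apply/mlP; rewrite -FE.
  have := code_onto _ (filter_subseqs (head_vecs xs) (fun m => set_of_bits xs m \in F)).
  rewrite Fcode => /hasP[t _ same].
  by exists t; rewrite FE; apply/famP.
- move=> t t'; have up u : upfamily (fam xs (code u)) by case/mlP: (code_ml u (ts_total u)).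
  rewrite opTE (lam_fam x0 xs_total opSE) //; apply/famP.
  by have /allP := code_hom t (ts_total t); apply.
Qed.

End Certificate.

(* Pointwise-equal operations can be substituted inside ordered unions and
   direct products; this lets us replace C2 by a computable presentation. *)
Lemma union_opE (S T : fsemigroup) opS opT :
  @sg_op S =2 opS -> @sg_op T =2 opT ->
  @sg_op (sg_union S T) =2 @sg_op (sg_union (FSG opS) (FSG opT)).
Proof. by move=> opSE opTE [a|a] [b|b] //=; rewrite ?opSE ?opTE. Qed.

Lemma prod_opE (S T : fsemigroup) opS opT :
  @sg_op S =2 opS -> @sg_op T =2 opT ->
  @sg_op (sg_prod S T) =2 @sg_op (sg_prod (FSG opS) (FSG opT)).
Proof. by move=> opSE opTE a b /=; rewrite opSE opTE. Qed.

(* Addition mod 2 without [inord], which does not reduce under vm_compute. *)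
Definition addC2 (a b : 'I_2) : 'I_2 := Ordinal (ltn_pmod (a + b) (isT : 0 < 2)).

Lemma addC2E : @sg_op C2 =2 addC2.
Proof. by move=> a b; apply: val_inj; rewrite /= inordK // ltn_pmod. Qed.

Definition one2 : 'I_2 := @Ordinal 2 1 isT.

Lemma I2P (a : 'I_2) : a = ord0 \/ a = one2.
Proof. by case: a => [[|[|k]] a_lt] //; [left | right]; apply: val_inj. Qed.

Definition principal (i : nat) (m : seq bool) : bool := nth false m i.
Definition at_least (k : nat) (m : seq bool) : bool := k <= count id m.

(* (5): S = L1 ⊔ C2 = {z, 0, 1} has exactly four maximal linked families: the
   three principal ones and the family of sets with at least two elements. The
   zero z of L1 is absorbing, and the two L1 summands of L1 ⊔ L1 ⊔ C2 go to the
   principal family at z and to the "two-element" family. *)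
Definition xs5 : seq (sg_car (sg_union (L 1) C2)) := [:: inl ord0; inr ord0; inr one2].
Definition ts5 : seq (sg_car (sg_union (sg_union (L 1) (L 1)) C2)) :=
  [:: inl (inl ord0); inl (inr ord0); inr ord0; inr one2].

Definition code5 (t : sg_car (sg_union (sg_union (L 1) (L 1)) C2)) : pred (seq bool) :=
  match t with
  | inl (inl _) => principal 0
  | inl (inr _) => at_least 2
  | inr c => principal c.+1
  end.

Lemma xs5_total : forall x, x \in xs5.
Proof. by case=> a; [rewrite (ord1 a) | case: (I2P a) => ->]. Qed.

Lemma ts5_total : forall t, t \in ts5.
Proof. by case=> [[a|a]|a]; [rewrite (ord1 a) | rewrite (ord1 a) | case: (I2P a) => ->]. Qed.

(* (6): on the four points (a, c) of S = L2 × C2, listed at positions 2a + c,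
   the twelve maximal linked families are the four principal ones, the four
   stars (sets of size >= 2 through a point, and all sets of size >= 3) and
   the four triangles (sets meeting the complement of a point in >= 2 points).
   The outer L1 summands go to principal families, the diagonal of L2 × L2 to
   stars and its off-diagonal to triangles. *)
Definition pos6 (a c : 'I_2) : nat := 2 * a + c.
Definition star (i : nat) (m : seq bool) : bool := principal i m && at_least 2 m || at_least 3 m.
Definition triangle (i : nat) (m : seq bool) : bool := 2 <= count id m - nth false m i.

Definition xs6 : seq (sg_car (sg_prod (L 2) C2)) :=
  [:: (ord0, ord0); (ord0, one2); (one2, ord0); (one2, one2)].
Definition ss6 : seq (sg_car (sg_union (sg_union (L 1) (sg_prod (L 2) (L 2))) (L 1))) :=
  [:: inl (inl ord0); inr ord0] ++ [seq inl (inr p) | p <- xs6].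
Definition ts6 :
    seq (sg_car (sg_prod (sg_union (sg_union (L 1) (sg_prod (L 2) (L 2))) (L 1)) C2)) :=
  [seq (s, c) | s <- ss6, c <- [:: ord0; one2]].

Definition code6
    (t : sg_car (sg_prod (sg_union (sg_union (L 1) (sg_prod (L 2) (L 2))) (L 1)) C2)) :
    pred (seq bool) :=
  let c := t.2 in
  match t.1 with
  | inl (inl _) => principal (pos6 ord0 c)
  | inr _ => principal (pos6 one2 c)
  | inl (inr (a, b)) => if a == b then star (pos6 a c) else triangle (pos6 b (addC2 c one2))
  end.

Lemma xs6_total : forall x, x \in xs6.
Proof. by case=> a b; case: (I2P a) => ->; case: (I2P b) => ->. Qed.

Lemma ts6_total : forall t, t \in ts6.
Proof.
case=> [[[a|[a b]]|a] c]; case: (I2P c) => ->; rewrite ?(ord1 a) //.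
all: by case: (I2P a) => ->; case: (I2P b) => ->.
Qed.

Theorem proposition4p1 :
  lambda_iso (sg_union (L 1) C2) (sg_union (sg_union (L 1) (L 1)) C2) /\
  lambda_iso (sg_prod (L 2) C2)
             (sg_prod (sg_union (sg_union (L 1) (sg_prod (L 2) (L 2))) (L 1)) C2).
Proof.
have refl_op (S : fsemigroup) : @sg_op S =2 @sg_op S by [].
split.
  apply: (@lambda_iso_of_certificate _ _ xs5 ts5 _ _ code5 (inl ord0)
            (union_opE (refl_op _) addC2E) (union_opE (refl_op _) addC2E)
            _ xs5_total ts5_total); by vm_compute.
apply: (@lambda_iso_of_certificate _ _ xs6 ts6 _ _ code6 (ord0, ord0)
          (prod_opE (refl_op _) addC2E) (prod_opE (refl_op _) addC2E)
          _ xs6_total ts6_total); by vm_compute.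
Qed.
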